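(* Let $n,r\ge 1$ be integers and $t_0\in\mathbb R$. Let $g:\mathbb R\times V\to\mathbb R^r$, $V\subseteq\mathbb R^r$ open, be continuous in $t$ and continuously differentiable in $z\in V$. For $i,j\in[n]$ let $w_{ij}(t,x)$ ($t\in\mathbb R$, $x\in\mathbb R^{nr}$) be continuous in $t$ and continuously differentiable in $x$, and suppose there are $\bar w<\infty$ and a non-negative, integrable, non-increasing function $\psi$ with $$\bar w\ \ge\ \sup_{t\ge t_0}\sup_x\max_{i\ne j}w_{ij}(t,x)\ \ge\ \inf_t w_{ij}(t,x)\ \ge\ \psi(S(x)).$$ Let $(x(t),v(t))$, $t\in[t_0,T)$, be the maximal solution of $$\dot x_i=v_i,\qquad \dot v_i=g(t,v_i)+\sum_{j=1}^n w_{ij}(t,x)(v_j-v_i),\quad t\ge t_0,\qquad x_i(t_0)=x_i^0,\ v_i(t_0)=v_i^0\in\mathbb R^r\ (i\in[n]),$$ and let $K=\sup_{t\in[t_0,T)}\max_{i,i'\in[n],l\in[r]}K(t,l,v_i(t),v_{i'}(t))$. Then for all $t\in[t_0,T)$, $$\frac{d}{dt}S(v(t))\le\big[K-n\psi(S(x(t)))\big]S(v(t)),$$ where $\frac{d}{dt}$ denotes the right-hand Dini derivative.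
   Context: $[k]=\{1,\dots,k\}$. For $y=(y_1,\dots,y_n)\in\mathbb R^{nr}$ with $y_i=(y_i^{(1)},\dots,y_i^{(r)})$, $S(y)=\max_{l\in[r]}\max_{i,j}|y_i^{(l)}-y_j^{(l)}|$. For $t\in\mathbb R$, $l\in[r]$, $y,w\in\mathbb R^r$, $$K(t,l,y,w)=\int_0^1\frac{\partial g^{(l)}}{\partial z^{(l)}}(t,qy+(1-q)w)\,dq+\sum_{h\ne l}\Big|\int_0^1\frac{\partial g^{(l)}}{\partial z^{(h)}}(t,qy+(1-q)w)\,dq\Big|.$$ *)

From HB Require Import structures.
From mathcomp Require Import all_boot all_order all_algebra.
From mathcomp Require Import all_classical all_reals all_analysis.
Set Implicit Arguments. Unset Strict Implicit. Unset Printing Implicit Defensive.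
Import Order.TTheory GRing.Theory Num.Theory.
Import numFieldNormedType.Exports.
Local Open Scope classical_set_scope.
Local Open Scope ring_scope.

Section Defs.
Variable R : realType.

(* A point y = (y_1,...,y_n) of R^{nr} is an n x r matrix; row i is y_i,
   entry (i,l) is y_i^{(l)}. *)

Definition Sdiam (n r : nat) (y : 'M[R]_(n, r)) : R :=
  \big[Num.max/0]_(l < r) \big[Num.max/0]_(i < n) \big[Num.max/0]_(j < n)
     `|y i l - y j l|.

Definition pderiv_g (r : nat) (g : R -> 'rV[R]_r -> 'rV[R]_r)
    (l h : 'I_r) (t : R) (z : 'rV[R]_r) : R :=
  ('D_(delta_mx 0 h) (g t) z) 0 l.

Definition Kfun (r : nat) (g : R -> 'rV[R]_r -> 'rV[R]_r)
    (t : R) (l : 'I_r) (y w : 'rV[R]_r) : R :=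
  Rintegral lebesgue_measure `[0, 1]
      (fun q => pderiv_g g l l t (q *: y + (1 - q) *: w))
  + \sum_(h < r | h != l)
      `| Rintegral lebesgue_measure `[0, 1]
           (fun q => pderiv_g g l h t (q *: y + (1 - q) *: w)) |.

Definition rhs_v (n r : nat) (g : R -> 'rV[R]_r -> 'rV[R]_r)
    (w : 'I_n -> 'I_n -> R -> 'M[R]_(n, r) -> R)
    (t : R) (x v : 'M[R]_(n, r)) : 'M[R]_(n, r) :=
  \matrix_(i, l) ((g t (row i v)) 0 l + \sum_(j < n) w i j t x * (v j l - v i l)).

(* (x, v) solves the system on [t0, T) (T may be +oo): initial conditions,
   v_i(t) stays in the domain V of g, derivatives in the interior and
   right derivatives at every point (in particular at t0). *)
Definition is_solution (n r : nat) (V : set 'rV[R]_r)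
    (g : R -> 'rV[R]_r -> 'rV[R]_r)
    (w : 'I_n -> 'I_n -> R -> 'M[R]_(n, r) -> R)
    (t0 : R) (x0 v0 : 'M[R]_(n, r)) (T : \bar R)
    (x v : R -> 'M[R]_(n, r)) : Prop :=
  [/\ x t0 = x0, v t0 = v0,
      (forall t, t0 <= t -> (t%:E < T)%E -> forall i, V (row i (v t))),
      (forall t, t0 < t -> (t%:E < T)%E ->
          is_derive t 1 x (v t) /\ is_derive t 1 v (rhs_v g w t (x t) (v t))) &
      (forall t, t0 <= t -> (t%:E < T)%E ->
          (fun h : R => h^-1 *: (x (t + h) - x t)) @ 0^'+ --> v t /\
          (fun h : R => h^-1 *: (v (t + h) - v t)) @ 0^'+
              --> rhs_v g w t (x t) (v t))].

Definition is_maximal_solution (n r : nat) (V : set 'rV[R]_r)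
    (g : R -> 'rV[R]_r -> 'rV[R]_r)
    (w : 'I_n -> 'I_n -> R -> 'M[R]_(n, r) -> R)
    (t0 : R) (x0 v0 : 'M[R]_(n, r)) (T : \bar R)
    (x v : R -> 'M[R]_(n, r)) : Prop :=
  [/\ (t0%:E < T)%E, is_solution V g w t0 x0 v0 T x v &
      ~ (exists (T' : \bar R) (x' v' : R -> 'M[R]_(n, r)),
            (T < T')%E /\ is_solution V g w t0 x0 v0 T' x' v')].

Definition dini_ur (f : R -> R) (t : R) : \bar R :=
  limf_esup (fun h : R => ((f (t + h) - f t) / h)%:E) (0^'+).

End Defs.

From HB Require Import structures.
From mathcomp Require Import all_boot all_order all_algebra.
From mathcomp Require Import all_classical all_reals all_analysis.
From mathcomp Require Import ring lra.
Set Implicit Arguments. Unset Strict Implicit.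
Import Order.TTheory GRing.Theory Num.Theory.
Import numFieldNormedType.Exports.
Local Open Scope classical_set_scope.
Local Open Scope ring_scope.

(* At time t the diameter S(v) is attained at some coordinate l and some pair
   (i, j) with v_i^l - v_j^l = S(v), and the right Dini derivative of a maximum
   of finitely many differentiable functions is bounded by the largest
   derivative among the active ones.  For an active pair every v_k^l lies
   between v_j^l and v_i^l, so the coupling terms contribute at most
   -n psi(S(x)) S(v), while the drift difference g^l(t, v_i) - g^l(t, v_j)
   equals sum_h (v_i^h - v_j^h) int_0^1 d_h g^l along the segment [v_j, v_i],
   which is at most K S(v) because |v_i^h - v_j^h| <= S(v) = v_i^l - v_j^l.
   The segment formula is the fundamental theorem of calculus, the chain rule
   along the segment coming from the continuity of the partial derivatives. *)

Section diameter.
Variables (R : realType) (n r : nat).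
Implicit Types y : 'M[R]_(n, r).

Lemma Sdiam_ge0 y : 0 <= Sdiam y.
Proof. exact: bigmax_ge_id. Qed.

Lemma dist_le_Sdiam y i j l : `|y i l - y j l| <= Sdiam y.
Proof.
apply: le_trans (le_bigmax _ _ l); apply: le_trans (le_bigmax _ _ i).
exact: (le_bigmax _ _ j).
Qed.

Lemma Sdiam_le y c : 0 <= c -> (forall i j l, `|y i l - y j l| <= c) ->
  Sdiam y <= c.
Proof.
move=> c0 yc.
by do 3![apply: bigmax_le => // ? _]; exact: yc.
Qed.

Lemma Sdiam_le_sub y c : (0 < n)%N -> (0 < r)%N ->
  (forall i j l, y i l - y j l <= c) -> Sdiam y <= c.
Proof.
move=> n0 r0 yc; apply: Sdiam_le => [|i j l].
  by have := yc (Ordinal n0) (Ordinal n0) (Ordinal r0); rewrite subrr.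
by rewrite ler_norml yc andbT lerNl opprB yc.
Qed.

Lemma Sdiam_active_between y i j l k : y i l - y j l = Sdiam y ->
  y j l <= y k l <= y i l.
Proof.
move=> ijS; have := dist_le_Sdiam y i k l; have := dist_le_Sdiam y k j l.
by rewrite -ijS !ler_norml => /andP[_ ?] /andP[_ ?]; apply/andP; split; lra.
Qed.

End diameter.

Section dini.
Variable R : realType.

Lemma dini_ur_le (f : R -> R) t (B : R) :
  (forall e, 0 < e -> \forall h \near 0^'+, f (t + h) <= f t + h * (B + e)) ->
  (dini_ur f t <= B%:E)%E.
Proof.
move=> fB; apply/lee_addgt0Pr => e e0.
have fBe : \forall h \near 0^'+, 0 < h /\ f (t + h) <= f t + h * (B + e).
  near=> h; split; first by near: h; exact: nbhs_right_gt.
  by near: h; exact: fB.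
rewrite /dini_ur limf_esupE.
apply: le_trans (ereal_inf_lbound _) _.
  by exists [set h | 0 < h /\ f (t + h) <= f t + h * (B + e)].
apply/ereal_supP => _ [h [h0 hB] <-].
by rewrite -EFinD lee_fin ler_pdivrMr // mulrC; lra.
Unshelve. all: by end_near.
Qed.

(* The slack [h * e] absorbs the error in the difference quotient when
   [f t = M]; when [f t < M], continuity from the right keeps [f] below [M]. *)
Lemma near_right_le_affine (f : R -> R) t (a B M e : R) :
  f t <= M -> (f t = M -> a <= B) -> 0 < e ->
  (fun h => (f (t + h) - f t) / h) @ 0^'+ --> a ->
  \forall h \near 0^'+, f (t + h) <= M + h * (B + e).
Proof.
move=> ftM aB e0 fa.
set q := fun h => (f (t + h) - f t) / h.
have fq : \forall h \near 0^'+, f (t + h) = f t + h * q h.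
  near=> h; have h0 : 0 < h by near: h; exact: nbhs_right_gt.
  by rewrite /q mulrCA mulfV ?gt_eqF // mulr1; lra.
have [ftMe|ftMn] := eqVneq (f t) M.
  have aBe : a < B + e by have := aB ftMe; lra.
  near=> h; have h0 : 0 < h by near: h; exact: nbhs_right_gt.
  have qB : q h <= B + e by near: h; exact: (cvgr_le _ fa _ aBe).
  have -> : f (t + h) = f t + h * q h by near: h; exact: fq.
  by rewrite -ftMe lerD2l ler_pM2l.
have ftMlt : f t < M by rewrite lt_neqAle ftMn ftM.
have lim0 : (fun h => f t + h * (q h - (B + e))) @ 0^'+ --> f t.
  have id0 : (fun h : R => h) @ 0^'+ --> 0 := cvg_at_right_filter cvg_id.
  have := cvgD (cvg_cst (f t)) (cvgM id0 (cvgB fa (cvg_cst (B + e)))).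
  by rewrite mul0r addr0; apply.
near=> h.
have hM : f t + h * (q h - (B + e)) < M.
  by near: h; exact: (cvgr_lt _ lim0 _ ftMlt).
have -> : f (t + h) = f t + h * q h by near: h; exact: fq.
by move: hM; rewrite mulrBr; lra.
Unshelve. all: by end_near.
Qed.

Lemma Sdiam_dini_le n r (v : R -> 'M[R]_(n, r)) t (D : 'M[R]_(n, r)) (B : R) :
  (0 < n)%N -> (0 < r)%N ->
  (fun h => h^-1 *: (v (t + h) - v t)) @ 0^'+ --> D ->
  (forall i j l, v t i l - v t j l = Sdiam (v t) -> D i l - D j l <= B) ->
  (dini_ur (fun s => Sdiam (v s)) t <= B%:E)%E.
Proof.
move=> n0 r0 vD DB; apply: dini_ur_le => e e0.
have pair_le i j l : \forall h \near 0^'+,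
    v (t + h) i l - v (t + h) j l <= Sdiam (v t) + h * (B + e).
  apply: (near_right_le_affine (f := fun s => v s i l - v s j l)
    (a := D i l - D j l)) => //.
  - by have := dist_le_Sdiam (v t) i j l; rewrite ler_norml => /andP[].
  - exact: DB.
  have entry k : (fun h => (h^-1 *: (v (t + h) - v t)) k l) @ 0^'+ --> D k l.
    exact: (continuous_cvg _ (@coord_continuous R _ _ k l D) vD).
  have -> : (fun h => (v (t + h) i l - v (t + h) j l - (v t i l - v t j l)) / h)
      = (fun h => (h^-1 *: (v (t + h) - v t)) i l -
                  (h^-1 *: (v (t + h) - v t)) j l).
    by apply/funext => h; rewrite !mxE; ring.
  exact: cvgB (entry i) (entry j).
have all_le : \forall h \near 0^'+, forall i j l,
    v (t + h) i l - v (t + h) j l <= Sdiam (v t) + h * (B + e).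
  by do 3!apply: filter_forall => ?; exact: pair_le.
near=> h.
have vh : forall i j l,
    v (t + h) i l - v (t + h) j l <= Sdiam (v t) + h * (B + e).
  by near: h; exact: all_le.
exact: Sdiam_le_sub vh.
Unshelve. all: by end_near.
Qed.

End dini.

Section matrix_norm.
Variables (R : realType) (m n : nat).
Implicit Type A : 'M[R]_(m, n).

Lemma mx_entry_le_norm A i j : `|A i j| <= `|A|.
Proof.
by rewrite [leRHS]/Num.Def.normr /= mx_normrE; exact: (le_bigmax _ _ (i, j)).
Qed.

Lemma mx_norm_le A c : 0 <= c -> (forall i j, `|A i j| <= c) -> `|A| <= c.
Proof.
move=> c0 Ac; rewrite [leLHS]/Num.Def.normr /= mx_normrE.
by apply: bigmax_le => // -[i j] _; exact: Ac.
Qed.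

End matrix_norm.

Lemma MVT_origin (R : realType) (f df : R -> R) (b : R) :
  (forall x : R, `|x| <= `|b| -> is_derive x 1 f (df x)) ->
  exists2 c, `|c| <= `|b| & f b - f 0 = df c * b.
Proof.
move=> fdf.
have cf (a c : R) : (forall x, x \in `[a, c] -> `|x| <= `|b|) ->
    {within `[a, c], continuous f}.
  by move=> ab; apply: derivable_within_continuous => x /ab /fdf [].
have [b0|b0] := lerP 0 b.
  have [c /[!in_itv] /= /andP[c0 cb] E] :
      exists2 c, c \in `[0, b] & f b - f 0 = df c * (b - 0).
    apply: (MVT_segment b0) => [x /[!in_itv] /= /andP[x0 xb]|].
      by apply: fdf; rewrite !ger0_norm ?(ltW xb) ?(ltW x0).
    by apply: cf => x /[!in_itv] /= /andP[x0 xb]; rewrite !ger0_norm.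
  by exists c; [rewrite !ger0_norm // (le_trans c0 cb) | rewrite E subr0].
have [c /[!in_itv] /= /andP[bc c0] E] :
    exists2 c, c \in `[b, 0] & f 0 - f b = df c * (0 - b).
  apply: (MVT_segment (ltW b0)) => [x /[!in_itv] /= /andP[bx x0]|].
    by apply: fdf; rewrite ltr0_norm // ltr0_norm // lerN2 (ltW bx).
  apply: cf => x /[!in_itv] /= /andP[bx x0].
  by rewrite ler0_norm // ltr0_norm // lerN2.
exists c; first by rewrite ler0_norm // ltr0_norm // lerN2.
by apply: oppr_inj; rewrite opprB E sub0r mulrN.
Qed.

Section partial_derivatives.
Variables (R : realType) (r : nat).
Implicit Types (F : 'rV[R]_r -> R) (p d : 'rV[R]_r).
Local Notation e_ h := (delta_mx 0 h : 'rV[R]_r).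

Lemma is_derive_line F p d (tau : R) df :
  is_derive (p + tau *: d) d F df ->
  is_derive tau 1 (fun s => F (p + s *: d)) df.
Proof.
move=> [dF <-].
have E : (fun h : R => h^-1 *:
      (((fun s => F (p + s *: d)) \o shift tau) (h *: 1) - F (p + tau *: d))) =
    (fun h : R => h^-1 *:
      ((F \o shift (p + tau *: d)) (h *: d) - F (p + tau *: d))).
  by apply/funext => h /=; rewrite /shift /= scaler1 scalerDl addrCA addrA.
by apply: DeriveDef; [rewrite /derivable E | rewrite /derive E].
Qed.

Definition row_prefix (d : 'rV[R]_r) (k : nat) : 'rV[R]_r :=
  \row_j (if (j < k)%N then d 0 j else 0).

Lemma row_prefix0 d : row_prefix d 0 = 0.
Proof. by apply/matrixP => i j; rewrite !mxE. Qed.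

Lemma row_prefix_full d : row_prefix d r = d.
Proof. by apply/matrixP => i j; rewrite !mxE ltn_ord ord1. Qed.

Lemma row_prefixS d (k : 'I_r) :
  row_prefix d k.+1 = row_prefix d k + d 0 k *: e_ k.
Proof.
apply/matrixP => i j; rewrite !mxE ord1 eqxx /= ltnS.
have [->|jk] := eqVneq j k; first by rewrite leqnn ltnn mulr1 add0r.
by rewrite mulr0 addr0 ltn_neqAle val_eqE jk.
Qed.

Lemma norm_row_prefix_step d (k : 'I_r) (u s : R) : `|s| <= `|u * d 0 k| ->
  `|u *: row_prefix d k + s *: e_ k| <= `|u| * `|d|.
Proof.
move=> sk; apply: mx_norm_le => [|i j]; first exact: mulr_ge0.
rewrite !mxE ord1 eqxx /=.
have [->|jk] := eqVneq j k.
  rewrite ltnn mulr0 mulr1 add0r (le_trans sk) //.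
  by rewrite normrM ler_wpM2l ?mx_entry_le_norm.
rewrite mulr0 addr0; case: ifP => _; last by rewrite mulr0 normr0 mulr_ge0.
by rewrite normrM ler_wpM2l ?mx_entry_le_norm.
Qed.

Lemma coordinate_increment_le F (k : 'I_r) p (b c eps : R) :
  (forall s, `|s| <= `|b| -> derivable F (p + s *: e_ k) (e_ k) /\
     `|c - 'D_(e_ k) F (p + s *: e_ k)| <= eps) ->
  `|b * c - (F (p + b *: e_ k) - F p)| <= `|b| * eps.
Proof.
move=> hk.
have [s sb ->] : exists2 s, `|s| <= `|b| &
    F (p + b *: e_ k) - F p = 'D_(e_ k) F (p + s *: e_ k) * b.
  have := @MVT_origin R (fun s => F (p + s *: e_ k))
    (fun s => 'D_(e_ k) F (p + s *: e_ k)) b.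
  rewrite /= scale0r addr0; apply => s /hk[dF _].
  exact/is_derive_line/derivableP.
by rewrite [b * c]mulrC -mulrBl normrM mulrC ler_wpM2l // (hk s sb).2.
Qed.

(* Go from z to z + u d one coordinate at a time, applying the mean value
   theorem on each leg. *)
Lemma increment_partials_le F z d (u eps : R) :
  (forall (k : 'I_r) s, `|s| <= `|u * d 0 k| ->
     let x := z + u *: row_prefix d k + s *: e_ k in
     derivable F x (e_ k) /\ `|'D_(e_ k) F z - 'D_(e_ k) F x| <= eps) ->
  `|u * \sum_(h < r) d 0 h * 'D_(e_ h) F z - (F (z + u *: d) - F z)|
    <= `|u| * \sum_(h < r) `|d 0 h| * eps.
Proof.
move=> near_z.
have step (k : 'I_r) : `|u * d 0 k * 'D_(e_ k) F z -
    (F (z + u *: row_prefix d k.+1) - F (z + u *: row_prefix d k))|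
    <= `|u * d 0 k| * eps.
  rewrite row_prefixS scalerDr addrA scalerA.
  exact: coordinate_increment_le (near_z k).
have -> : F (z + u *: d) - F z = \sum_(k < r)
    (F (z + u *: row_prefix d k.+1) - F (z + u *: row_prefix d k)).
  rewrite -(big_mkord xpredT (fun k => F (z + u *: row_prefix d k.+1)
    - F (z + u *: row_prefix d k))).
  by rewrite telescope_sumr // row_prefix_full row_prefix0 scaler0 addr0.
rewrite mulr_sumr -sumrB mulr_sumr.
apply: le_trans (ler_norm_sum _ _ _) _; apply: ler_sum => k _.
by rewrite !mulrA -normrM; exact: step.
Qed.

Lemma is_derive_partials F (U : set 'rV[R]_r) z d :
  open U -> U z -> (forall x h, U x -> derivable F x (e_ h)) ->
  (forall h, {for z, continuous ('D_(e_ h) F)}) ->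
  is_derive z d F (\sum_(h < r) d 0 h * 'D_(e_ h) F z).
Proof.
move=> oU Uz dF cF; set L := \sum_(h < r) _.
suff dL : (fun u : R => u^-1 *: ((F \o shift z) (u *: d) - F z)) @ 0^' --> L.
  by apply: DeriveDef; [apply/cvg_ex; exists L | exact: cvg_lim].
apply/cvgrPdist_le => e e0.
set S := \sum_(h < r) `|d 0 h|.
have S1 : 0 < S + 1 by rewrite ltr_wpDl // sumr_ge0.
have e'0 : 0 < e / (S + 1) by rewrite divr_gt0.
have near_z : \forall x \near z,
    U x /\ forall h, `|'D_(e_ h) F z - 'D_(e_ h) F x| <= e / (S + 1).
  near=> x; split; first by near: x; exact: open_nbhs_nbhs.
  near: x; apply: filter_forall => h.
  by move/cvgrPdist_le : (cF h); apply.
move/nbhs_normP : near_z => [del del0 hdel].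
near=> u.
have u0 : u != 0 by near: u; exact: nbhs_dnbhs_neq.
have ud : `|u| * `|d| < del.
  have : `|u| < del / (`|d| + 1).
    by near: u; apply: dnbhs0_lt; rewrite divr_gt0 // ltr_wpDl.
  rewrite ltr_pdivlMr ?ltr_wpDl // => /(le_lt_trans _); apply.
  by rewrite ler_wpM2l // lerDl.
have -> : L - u^-1 *: ((F \o shift z) (u *: d) - F z) =
    u^-1 * (u * L - (F (z + u *: d) - F z)).
  by rewrite /= /shift /= [u *: d + z]addrC mulrBr mulrA mulVf // mul1r.
rewrite normrM normfV ler_pdivrMl ?normr_gt0 //.
apply: le_trans (increment_partials_le (eps := e / (S + 1)) _) _.
  move=> k s sk /=.
  have /hdel[Ux Dx] :
      ball_ Num.norm z del (z + u *: row_prefix d k + s *: e_ k).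
    rewrite /ball_ /= -addrA opprD addrA subrr add0r normrN.
    exact: le_lt_trans (norm_row_prefix_step sk) ud.
  by split; [exact: dF | exact: Dx].
rewrite ler_wpM2l // -mulr_suml -/S mulrA ler_pdivrMr //; lra.
Unshelve. all: by end_near.
Qed.

End partial_derivatives.

Section entry_derivative.
Variables (R : realType) (V : normedModType R) (m n : nat).

Lemma derive_entry (G : V -> 'M[R]_(m, n)) x v i j :
  derivable G x v -> 'D_v (fun z => G z i j) x = 'D_v G x i j.
Proof. by move=> dG; rewrite derive_mx // mxE. Qed.

Lemma continuous_derive_entry (G : V -> 'M[R]_(m, n)) (U : set V) x v i j :
  open U -> U x -> (forall z, U z -> derivable G z v) ->
  {for x, continuous ('D_v G)} -> {for x, continuous ('D_v (fun z => G z i j))}.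
Proof.
move=> oU Ux dG cG.
have DGij : {near x, (fun z => 'D_v G z i j) =1 'D_v (fun z => G z i j)}.
  near=> z; rewrite derive_entry //; apply: dG.
  by near: z; exact: open_nbhs_nbhs.
have cGij : (fun z => 'D_v G z i j) @ x --> 'D_v (fun z => G z i j) x.
  rewrite derive_entry; last exact: dG.
  exact: (continuous_cvg _ (@coord_continuous R _ _ i j _) cG).
exact: cvg_trans (near_eq_cvg DGij) cGij.
Unshelve. all: by end_near.
Qed.

End entry_derivative.

Lemma Rintegral_sum d (T : measurableType d) (R : realType)
    (mu : {measure set T -> \bar R}) (D : set T) (I : Type) (s : seq I)
    (f : I -> T -> R) :
  measurable D -> (forall i, mu.-integrable D (EFin \o f i)) ->
  Rintegral mu D (fun x => \sum_(i <- s) f i x) =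
  \sum_(i <- s) Rintegral mu D (f i).
Proof.
move=> mD intf; elim: s => [|a s IH].
  under eq_Rintegral do rewrite big_nil.
  by rewrite big_nil Rintegral_cst // mul0r.
under eq_Rintegral do rewrite big_cons.
rewrite RintegralD // ?IH ?big_cons //.
have -> : EFin \o (fun x => \sum_(i <- s) f i x) =
    (fun x => \sum_(i <- s) (EFin \o f i) x).
  by apply/funext => x /=; rewrite sumEFin.
exact: integrable_sum.
Qed.

Lemma Rintegral_derive (R : realType) (phi f : R -> R) (a b : R) : a < b ->
  (forall q, a <= q <= b -> is_derive q 1 phi (f q)) ->
  {within `[a, b], continuous f} ->
  Rintegral lebesgue_measure `[a, b] f = phi b - phi a.
Proof.
move=> ab der cf.
have cphi (q : R) : a <= q <= b -> {for q, continuous phi}.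
  by move=> /der [dphi _]; apply/differentiable_continuous/derivable1_diffP.
have phiab : derivable_oo_LRcontinuous phi a b.
  split.
  - by move=> q /[!in_itv] /= /andP[aq qb]; case: (der q); rewrite ?ltW.
  - by apply: cvg_at_right_filter; apply: cphi; rewrite lexx ltW.
  - by apply: cvg_at_left_filter; apply: cphi; rewrite lexx ltW.
have phi'f : {in `]a, b[, derive1 phi =1 f}.
  move=> q /[!in_itv] /= /andP[aq qb].
  rewrite derive1E; apply: (@derive_val _ _ _ _ _ _ _ (der q _)).
  by rewrite !ltW.
by rewrite /Rintegral (continuous_FTC2 ab cf phiab phi'f) -EFinB.
Qed.

Lemma ler_sum_mul_pivot (R : realDomainType) r (a b : 'I_r -> R) l :
  (forall h, `|a h| <= a l) ->
  \sum_(h < r) a h * b h <= (b l + \sum_(h < r | h != l) `|b h|) * a l.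
Proof.
move=> al; rewrite (bigD1 l) //= mulrDl [a l * _]mulrC lerD2l mulr_suml.
apply: ler_sum => h _; apply: le_trans (ler_norm _) _.
by rewrite normrM mulrC ler_wpM2l.
Qed.

Section segment.
Variables (R : realType) (r : nat).
Local Notation e_ h := (delta_mx 0 h : 'rV[R]_r).

Lemma segment_mean_value (F : 'rV[R]_r -> R) (U : set 'rV[R]_r)
    (y w : 'rV[R]_r) :
  open U -> (forall x h, U x -> derivable F x (e_ h)) ->
  (forall x h, U x -> {for x, continuous ('D_(e_ h) F)}) ->
  (forall q, 0 <= q <= 1 -> U (q *: y + (1 - q) *: w)) ->
  F y - F w = \sum_(h < r) (y 0 h - w 0 h) *
    Rintegral lebesgue_measure `[0, 1]
      (fun q => 'D_(e_ h) F (q *: y + (1 - q) *: w)).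
Proof.
move=> oU dF cF Useg.
set d := y - w.
have aff (q : R) : q *: y + (1 - q) *: w = w + q *: d.
  by rewrite /d scalerBl scale1r scalerBr addrCA.
have Uq (q : R) : 0 <= q <= 1 -> U (w + q *: d) by rewrite -aff; exact: Useg.
set P := fun h q => 'D_(e_ h) F (w + q *: d).
set f := fun q => \sum_(h < r) d 0 h * P h q.
set phi := fun s => F (w + s *: d).
have der (q : R) : 0 <= q <= 1 -> is_derive q 1 phi (f q).
  move=> /Uq Uwq; apply: is_derive_line.
  exact: is_derive_partials oU Uwq dF (fun h => cF _ h Uwq).
have contP h (q : R) : 0 <= q <= 1 -> {for q, continuous (P h)}.
  move=> /Uq Uwq.
  have line : {for q, continuous (fun q : R => w + q *: d)}.
    by apply: continuousD; [exact: cst_continuous | exact: scalel_continuous].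
  exact: (continuous_comp line (cF _ h Uwq)).
have cdP h (c q : R) : 0 <= q <= 1 -> {for q, continuous (fun q => c * P h q)}.
  by move=> q01; exact: cvgM (cvg_cst _) (contP h q q01).
have int01 (g : R -> R) : (forall q, 0 <= q <= 1 -> {for q, continuous g}) ->
    lebesgue_measure.-integrable `[0, 1] (EFin \o g).
  move=> cg; apply: continuous_compact_integrable; first exact: segment_compact.
  by apply/continuous_in_subspaceT => q /[!inE] /= /[!in_itv] /= /cg.
have contf : {within `[0, 1], continuous f}.
  apply/continuous_in_subspaceT => q /[!inE] /= /[!in_itv] /= q01.
  apply: cvg_big => [|h _]; first exact: add_continuous.
  exact: cdP.
have FTC := Rintegral_derive ltr01 der contf.
have -> : F y - F w = phi 1 - phi 0.
  by rewrite /phi scale1r scale0r addr0 /d addrCA subrr addr0.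
rewrite -FTC Rintegral_sum; last 2 first.
- exact: measurable_itv.
- by move=> h; apply: int01; exact: cdP.
apply: eq_bigr => h _; rewrite RintegralZl; last 2 first.
- exact: measurable_itv.
- by apply: int01; exact: contP.
rewrite /d !mxE; congr (_ * _).
by apply: eq_Rintegral => q _; rewrite /P aff.
Qed.

Lemma drift_diff_le (g : R -> 'rV[R]_r -> 'rV[R]_r) t (U : set 'rV[R]_r)
    (y w : 'rV[R]_r) l :
  open U ->
  (forall h z, U z -> derivable (g t) z (e_ h) /\
     {for z, continuous ('D_(e_ h) (g t))}) ->
  (forall q, 0 <= q <= 1 -> U (q *: y + (1 - q) *: w)) ->
  (forall h, `|y 0 h - w 0 h| <= y 0 l - w 0 l) ->
  g t y 0 l - g t w 0 l <= Kfun g t l y w * (y 0 l - w 0 l).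
Proof.
move=> oU hg Useg yw.
have dl x h : U x -> derivable (fun z => g t z 0 l) x (e_ h).
  by case/(hg h) => /derivable_mxP.
have cDl x h : U x -> {for x, continuous ('D_(e_ h) (fun z => g t z 0 l))}.
  move=> Ux; apply: (continuous_derive_entry oU Ux) => [z Uz|].
    exact: (hg h z Uz).1.
  exact: (hg h x Ux).2.
rewrite (segment_mean_value oU dl cDl Useg).
rewrite (eq_bigr (fun h => (y 0 h - w 0 h) * Rintegral lebesgue_measure `[0, 1]
    (fun q => pderiv_g g l h t (q *: y + (1 - q) *: w)))).
  exact: ler_sum_mul_pivot.
move=> h _; congr (_ * _).
apply: eq_Rintegral => q /[!inE] /= /[!in_itv] /= q01.
by rewrite derive_entry //; case: (hg h _ (Useg q q01)).
Qed.

End segment.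

Section velocity_field.
Variables (R : realType) (n r : nat).

Lemma consensus_diff_le (c : 'I_n -> 'I_n -> R) (p : R) (y : 'M[R]_(n, r))
    i j l :
  (forall i k, p <= c i k) -> y i l - y j l = Sdiam y ->
  \sum_(k < n) c i k * (y k l - y i l) - \sum_(k < n) c j k * (y k l - y j l)
    <= - (n%:R * p * Sdiam y).
Proof.
move=> pc ijS; rewrite -sumrB.
apply: le_trans (_ : \sum_(k < n) - (p * Sdiam y) <= _).
  apply: ler_sum => k _; have /andP[jk ki] := Sdiam_active_between k ijS.
  by have := pc i k; have := pc j k; rewrite -ijS; nra.
by rewrite sumr_const card_ord mulNrn lerN2 -mulrA mulr_natl.
Qed.

Lemma rhs_v_diff_le (V : set 'rV[R]_r) (g : R -> 'rV[R]_r -> 'rV[R]_r)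
    (w : 'I_n -> 'I_n -> R -> 'M[R]_(n, r) -> R) (psi : R -> R) t
    (x v : 'M[R]_(n, r)) i j l :
  open V ->
  (forall h z, V z -> derivable (g t) z (delta_mx 0 h) /\
     {for z, continuous ('D_(delta_mx 0 h) (g t))}) ->
  (forall i k, psi (Sdiam x) <= w i k t x) ->
  (forall q, 0 <= q <= 1 -> V (q *: row i v + (1 - q) *: row j v)) ->
  v i l - v j l = Sdiam v ->
  rhs_v g w t x v i l - rhs_v g w t x v j l <=
    (Kfun g t l (row i v) (row j v) - n%:R * psi (Sdiam x)) * Sdiam v.
Proof.
move=> oV hg wpsi Vseg ijS.
have drift : g t (row i v) 0 l - g t (row j v) 0 l <=
    Kfun g t l (row i v) (row j v) * Sdiam v.
  have := drift_diff_le (l := l) oV hg Vseg; rewrite !mxE ijS; apply => h.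
  by rewrite !mxE dist_le_Sdiam.
have := consensus_diff_le (c := fun i k => w i k t x) wpsi ijS.
by rewrite /rhs_v !mxE mulrBl; lra.
Qed.

End velocity_field.

Theorem lemma1 (R : realType) (n r : nat) (hn : (0 < n)%N) (hr : (0 < r)%N)
  (t0 : R)
  (V : set 'rV[R]_r) (hV : open V)
  (g : R -> 'rV[R]_r -> 'rV[R]_r)
  (hg_t : forall z, V z -> continuous (fun t => g t z))
  (hg_z : forall (t : R) (h : 'I_r) (z : 'rV[R]_r), V z ->
     derivable (g t) z (delta_mx 0 h) /\
     {for z, continuous (fun z' => 'D_(delta_mx 0 h) (g t) z')})
  (w : 'I_n -> 'I_n -> R -> 'M[R]_(n, r) -> R)
  (hw_t : forall i j (y : 'M[R]_(n, r)), continuous (fun t => w i j t y))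
  (hw_x : forall i j (t : R) (k : 'I_n) (l : 'I_r) (y : 'M[R]_(n, r)),
     derivable (w i j t) y (delta_mx k l) /\
     {for y, continuous (fun y' => 'D_(delta_mx k l) (w i j t) y')})
  (wbar : R) (psi : R -> R)
  (hpsi0 : forall s, 0 <= s -> 0 <= psi s)
  (hpsi_int : lebesgue_measure.-integrable `[0, +oo[ (EFin \o psi))
  (hpsi_dec : forall a b, 0 <= a -> a <= b -> psi b <= psi a)
  (hwbar : forall (t : R) (y : 'M[R]_(n, r)) i j, t0 <= t -> i != j ->
     w i j t y <= wbar)
  (hwpsi : forall (t : R) (y : 'M[R]_(n, r)) i j, psi (Sdiam y) <= w i j t y)
  (x0 v0 : 'M[R]_(n, r)) (T : \bar R) (x v : R -> 'M[R]_(n, r))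
  (hsol : is_maximal_solution V g w t0 x0 v0 T x v)
  (hseg : forall (t : R) (i i' : 'I_n) (q : R), t0 <= t -> (t%:E < T)%E ->
     0 <= q <= 1 -> V (q *: row i (v t) + (1 - q) *: row i' (v t))) :
  let K : \bar R :=
    ereal_sup [set k | exists (t : R) (i i' : 'I_n) (l : 'I_r),
        [/\ t0 <= t, (t%:E < T)%E &
            k = (Kfun g t l (row i (v t)) (row i' (v t)))%:E]] in
  forall t : R, t0 <= t -> (t%:E < T)%E ->
    (dini_ur (fun s => Sdiam (v s)) t
       <= (K - (n%:R * psi (Sdiam (x t)))%:E) * (Sdiam (v t))%:E)%E.
Proof.
(* Only the lower bound [psi (Sdiam y) <= w i j t y], the regularity of [g] in
   [z] and the segment condition enter this pointwise inequality; the other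
   hypotheses matter elsewhere in the paper. *)
move=> K t t0t tT.
have [_ [_ _ _ _ /(_ t t0t tT) [_ dv]] _] := hsol.
have active l i j : v t i l - v t j l = Sdiam (v t) ->
    rhs_v g w t (x t) (v t) i l - rhs_v g w t (x t) (v t) j l <=
    (Kfun g t l (row i (v t)) (row j (v t)) - n%:R * psi (Sdiam (x t))) *
      Sdiam (v t).
  move=> ijS; apply: (rhs_v_diff_le hV (hg_z t) _ _ ijS) => [i' k|q q01].
    exact: hwpsi.
  exact: hseg.
have KfunK l i j : ((Kfun g t l (row i (v t)) (row j (v t)))%:E <= K)%E.
  by apply: ereal_sup_ubound; exists t, i, j, l.
have := Sdiam_ge0 (v t); rewrite le_eqVlt => /predU1P[S0|Spos].
  rewrite -S0 mule0; apply: Sdiam_dini_le hn hr dv _ => i j l /active.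
  by rewrite -S0 mulr0.
case EK : K => [k| |].
- apply: le_trans (Sdiam_dini_le hn hr dv
    (B := (k - n%:R * psi (Sdiam (x t))) * Sdiam (v t)) _) _; last first.
    by rewrite -EFinB -EFinM.
  move=> i j l /active /le_trans; apply.
  by rewrite ler_pM2r // lerD2r -lee_fin -EK.
- by rewrite addye // gt0_mulye ?lte_fin // leey.
- by have := KfunK (Ordinal hr) (Ordinal hn) (Ordinal hn); rewrite EK leeNy_eq.
Qed.
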